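(* Let $(A,\star,\mathcal{B}_A)$ be a quadratic permutative algebra and $(B,\bullet,\{\cdot,\cdot\},\mathcal{B}_B)$ a quadratic Poisson algebra. On $A\otimes B$ define $(x\otimes a)\circ(y\otimes b)=(x\star y)\otimes(a\bullet b)$, $[x\otimes a,y\otimes b]=(x\star y)\otimes\{a,b\}$ and $\mathcal{B}_{A\otimes B}(x\otimes a,y\otimes b)=\mathcal{B}_A(x,y)\mathcal{B}_B(a,b)$. Then $(A\otimes B,\circ,[\cdot,\cdot],\mathcal{B}_{A\otimes B})$ is a quadratic dual pre-Poisson algebra.
   Context: Field $\mathbb{F}$ of characteristic $0$. A quadratic permutative algebra $(A,\star,\mathcal{B}_A)$: $x\star(y\star z)=(x\star y)\star z=(y\star x)\star z$, with $\mathcal{B}_A$ a nondegenerate skew-symmetric bilinear form satisfying $\mathcal{B}_A(x\star y,z)=\mathcal{B}_A(x,y\star z-z\star y)$. A quadratic Poisson algebra $(B,\bullet,\{\cdot,\cdot\},\mathcal{B}_B)$: a Poisson algebra ($(B,\bullet)$ commutative associative, $(B,\{\cdot,\cdot\})$ Lie, $\{x,y\bullet z\}=\{x,y\}\bullet z+y\bullet\{x,z\}$) with a nondegenerate symmetric bilinear form satisfying $\mathcal{B}_B(x\bullet y,z)=\mathcal{B}_B(x,y\bullet z)$ and $\mathcal{B}_B(\{x,y\},z)=\mathcal{B}_B(x,\{y,z\})$. A quadratic dual pre-Poisson algebra is a dual pre-Poisson algebra ($x\circ(y\circ z)=(x\circ y)\circ z=(y\circ x)\circ z$; $[x,[y,z]]=[[x,y],z]+[y,[x,z]]$;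 $[x,y\circ z]=[x,y]\circ z+y\circ[x,z]$; $[x\circ y,z]=x\circ[y,z]+y\circ[x,z]$; $[x,y]\circ z=-[y,x]\circ z$) with a nondegenerate skew-symmetric bilinear form $\mathcal{B}$ satisfying $\mathcal{B}(x\circ y,z)=\mathcal{B}(x,y\circ z-z\circ y)$ and $\mathcal{B}([x,y],z)=\mathcal{B}(x,[y,z]+[z,y])$. *)

From HB Require Import structures.
From mathcomp Require Import all_boot all_order all_algebra.
Set Implicit Arguments. Unset Strict Implicit. Unset Printing Implicit Defensive.
Import GRing.Theory.
Local Open Scope ring_scope.

Definition bilinear_map (F : fieldType) (V W : lmodType F) (f : V -> V -> W) :=
  (forall (c : F) x y z, f (c *: x + y) z = c *: f x z + f y z) /\
  (forall (c : F) x y z, f x (c *: y + z) = c *: f x y + f x z).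

Definition bilinear_form (F : fieldType) (V : lmodType F) (f : V -> V -> F) :=
  (forall (c : F) x y z, f (c *: x + y) z = c * f x z + f y z) /\
  (forall (c : F) x y z, f x (c *: y + z) = c * f x y + f x z).

Definition nondegenerate (F : fieldType) (V : lmodType F) (f : V -> V -> F) :=
  forall x, (forall y, f x y = 0) -> x = 0.

Definition skew_symmetric (F : fieldType) (V : lmodType F) (f : V -> V -> F) :=
  forall x y, f x y = - f y x.

Definition symmetric_form (F : fieldType) (V : lmodType F) (f : V -> V -> F) :=
  forall x y, f x y = f y x.

Definition quadratic_permutative (F : fieldType) (V : lmodType F)
    (star : V -> V -> V) (B : V -> V -> F) :=
  [/\ bilinear_map star,
      (forall x y z, star x (star y z) = star (star x y) z),
      (forall x y z, star (star x y) z = star (star y x) z),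
      bilinear_form B &
   [/\ skew_symmetric B, nondegenerate B &
      (forall x y z, B (star x y) z = B x (star y z - star z y))]].

Definition quadratic_poisson (F : fieldType) (V : lmodType F)
    (dot br : V -> V -> V) (B : V -> V -> F) :=
  [/\ bilinear_map dot, bilinear_map br,
      (forall x y, dot x y = dot y x),
      (forall x y z, dot x (dot y z) = dot (dot x y) z) &
   [/\ (forall x y, br x y = - br y x),
       (forall x y z, br x (br y z) + br y (br z x) + br z (br x y) = 0),
       (forall x y z, br x (dot y z) = dot (br x y) z + dot y (br x z)),
       bilinear_form B &
    [/\ symmetric_form B, nondegenerate B,
        (forall x y z, B (dot x y) z = B x (dot y z)) &
        (forall x y z, B (br x y) z = B x (br y z))]]].

Definition quadratic_dual_pre_poisson (F : fieldType) (V : lmodType F)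
    (circ br : V -> V -> V) (B : V -> V -> F) :=
  [/\ bilinear_map circ, bilinear_map br,
      (forall x y z, circ x (circ y z) = circ (circ x y) z),
      (forall x y z, circ (circ x y) z = circ (circ y x) z) &
   [/\ (forall x y z, br x (br y z) = br (br x y) z + br y (br x z)),
       (forall x y z, br x (circ y z) = circ (br x y) z + circ y (br x z)),
       (forall x y z, br (circ x y) z = circ x (br y z) + circ y (br x z)),
       (forall x y z, circ (br x y) z = - circ (br y x) z) &
    [/\ bilinear_form B, skew_symmetric B, nondegenerate B,
        (forall x y z, B (circ x y) z = B x (circ y z - circ z y)) &
        (forall x y z, B (br x y) z = B x (br y z + br z y))]]].

(* Finite-dimensional model: A = F^n, B = F^m (row vectors), and
   A (x) B = 'M_(n,m), with the pure tensor x (x) a := x^T *m a. *)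
Definition tens (F : fieldType) (n m : nat) (x : 'rV[F]_n) (a : 'rV[F]_m)
  : 'M[F]_(n, m) := x^T *m a.

Definition basis_vec {F : fieldType} {n : nat} (i : 'I_n) : 'rV[F]_n :=
  delta_mx 0 i.

(* Bilinear extension of (x (x) a, y (x) b) |-> mu x y (x) nu a b. *)
Definition tensor_op (F : fieldType) (n m : nat)
    (mu : 'rV[F]_n -> 'rV[F]_n -> 'rV[F]_n)
    (nu : 'rV[F]_m -> 'rV[F]_m -> 'rV[F]_m)
    (X Y : 'M[F]_(n, m)) : 'M[F]_(n, m) :=
  \sum_(i < n) \sum_(j < n) \sum_(k < m) \sum_(l < m)
     (X i k * Y j l) *: tens (mu (basis_vec (F:=F) i) (basis_vec (F:=F) j))
                             (nu (basis_vec (F:=F) k) (basis_vec (F:=F) l)).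

(* Bilinear extension of (x (x) a, y (x) b) |-> BA x y * BB a b. *)
Definition tensor_form (F : fieldType) (n m : nat)
    (BA : 'rV[F]_n -> 'rV[F]_n -> F) (BB : 'rV[F]_m -> 'rV[F]_m -> F)
    (X Y : 'M[F]_(n, m)) : F :=
  \sum_(i < n) \sum_(j < n) \sum_(k < m) \sum_(l < m)
     X i k * Y j l * (BA (basis_vec (F:=F) i) (basis_vec (F:=F) j) * BB (basis_vec (F:=F) k) (basis_vec (F:=F) l)).

From Pilot Require Import Defs.
From HB Require Import structures.
From mathcomp Require Import all_boot all_order all_algebra.
From mathcomp Require Import ring.
Import GRing.Theory.
Set Implicit Arguments.
Unset Strict Implicit.
Unset Printing Implicit Defensive.
Local Open Scope ring_scope.

(* All operations and the form on [A (x) B = 'M_(n, m)] are bilinear, so each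
   axiom of a quadratic dual pre-Poisson algebra is a multilinear identity and
   it suffices to check it on pure tensors [x (x) a].  There it factors into a
   statement about [A] and one about [B]: in a permutative algebra
   [x(yz) = (xy)z = (yx)z = y(xz)], so all triple products on the [A] side
   coincide and what remains on the [B] side is the Leibniz rule, the Jacobi
   identity written as a Leibniz rule, skew-symmetry, or invariance of [B_B].
   For nondegeneracy, pairing [X] with all pure tensors [y (x) b] and using
   nondegeneracy of [B_B] and then of [B_A] kills every column of [X]. *)

Section LinearMap.
Variables (F : fieldType) (U W : lmodType F).
Implicit Types (g h : U -> W).

Lemma linear_map_sum h I r (P : pred I) (u : I -> U) : linear h ->
  h (\sum_(i <- r | P i) u i) = \sum_(i <- r | P i) h (u i).
Proof.
by move=> /GRing.semilinear_linear/GRing.nmod_morphism_semilinear[h0 hD];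
  apply: big_morph.
Qed.

Lemma linear_mapZ h c u : linear h -> h (c *: u) = c *: h u.
Proof. by move=> lh; apply: GRing.scalable_linear. Qed.

Lemma linear_idfun : linear (fun u : U => u).
Proof. by []. Qed.

Lemma linear_addfun g h : linear g -> linear h -> linear (fun u => g u + h u).
Proof. by move=> lg lh c u v; rewrite lg lh scalerDr addrACA. Qed.

Lemma linear_oppfun h : linear h -> linear (fun u => - h u).
Proof. by move=> lh c u v; rewrite lh opprD scalerN. Qed.

End LinearMap.

Section Multilinear.
Variables (F : fieldType) (U V W : lmodType F).

Lemma bilinear_map_linearl (f : V -> V -> W) y : bilinear_map f -> linear (f^~ y).
Proof. by case=> fl _ c x x'; apply: fl. Qed.

Lemma bilinear_map_linearr (f : V -> V -> W) x : bilinear_map f -> linear (f x).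
Proof. by case=> _ fr c y y'; apply: fr. Qed.

Lemma bilinear_mapNl (f : V -> V -> W) x y : bilinear_map f -> f (- x) y = - f x y.
Proof.
by move=> /(bilinear_map_linearl y) fl; rewrite -scaleN1r (linear_mapZ _ _ fl) scaleN1r.
Qed.

Lemma bilinear_mapNr (f : V -> V -> W) x y : bilinear_map f -> f x (- y) = - f x y.
Proof.
by move=> /(bilinear_map_linearr x) fr; rewrite -scaleN1r (linear_mapZ _ _ fr) scaleN1r.
Qed.

Lemma bilinear_mapP (f : V -> V -> W) :
  (forall y, linear (f^~ y)) -> (forall x, linear (f x)) -> bilinear_map f.
Proof. by move=> fl fr; split=> c x y z; [apply: fl | apply: fr]. Qed.

Lemma linear_bilinl (f : V -> V -> W) (g : U -> V) y :
  bilinear_map f -> linear g -> linear (fun u => f (g u) y).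
Proof. by move=> /(bilinear_map_linearl y) fl lg c u v; rewrite lg fl. Qed.

Lemma linear_bilinr (f : V -> V -> W) (g : U -> V) x :
  bilinear_map f -> linear g -> linear (fun u => f x (g u)).
Proof. by move=> /(bilinear_map_linearr x) fr lg c u v; rewrite lg fr. Qed.

Lemma bilinear_form_map (f : V -> V -> F) :
  bilinear_form f -> bilinear_map (W := F^o) f.
Proof. by []. Qed.

(* An [F]-valued form is linear only as a map into the regular module [F^o]. *)
Lemma linear_forml (f : V -> V -> F) (g : U -> V) y :
  bilinear_form f -> linear g -> linear (fun u => f (g u) y : F^o).
Proof. by move=> [fl _] lg c u v; rewrite lg fl. Qed.

Lemma linear_formr (f : V -> V -> F) (g : U -> V) x :
  bilinear_form f -> linear g -> linear (fun u => f x (g u) : F^o).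
Proof. by move=> [_ fr] lg c u v; rewrite lg fr. Qed.

Definition trilinear_map (f : V -> V -> V -> W) :=
  [/\ forall y z, linear (fun x => f x y z), forall x z, linear (fun y => f x y z)
    & forall x y, linear (fun z => f x y z)].

End Multilinear.

Lemma linear_row_expand (F : fieldType) k (W : lmodType F) (h : 'rV[F]_k -> W) x :
  linear h -> h x = \sum_(i < k) x 0 i *: h (basis_vec i).
Proof.
move=> lh; rewrite {1}(row_sum_delta x) linear_map_sum //.
by apply: eq_bigr => i _; rewrite linear_mapZ.
Qed.

Lemma bilinear_map_expand (F : fieldType) k (W : lmodType F)
    (f : 'rV[F]_k -> 'rV[F]_k -> W) x y : bilinear_map f ->
  f x y = \sum_(i < k) \sum_(j < k) (x 0 i * y 0 j) *: f (basis_vec i) (basis_vec j).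
Proof.
move=> hf; rewrite (linear_row_expand _ (bilinear_map_linearl y hf)).
apply: eq_bigr => i _; rewrite (linear_row_expand _ (bilinear_map_linearr _ hf)).
by rewrite scaler_sumr; apply: eq_bigr => j _; rewrite scalerA.
Qed.

Section PoissonIdentities.
Variables (F : fieldType) (V : lmodType F) (dot br : V -> V -> V).
Hypotheses (hdot : bilinear_map dot) (hbr : bilinear_map br).
Hypothesis brN : forall x y, br x y = - br y x.

Lemma lie_leibniz :
  (forall x y z, br x (br y z) + br y (br z x) + br z (br x y) = 0) ->
  forall x y z, br x (br y z) = br (br x y) z + br y (br x z).
Proof.
move=> jacobi x y z; rewrite (brN (br x y)) (brN x z) bilinear_mapNr //.
by move/eqP: (jacobi x y z); rewrite -addrA addr_eq0 opprD addrC => /eqP.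
Qed.

Lemma poisson_leibnizl :
  (forall x y, dot x y = dot y x) ->
  (forall x y z, br x (dot y z) = dot (br x y) z + dot y (br x z)) ->
  forall x y z, br (dot x y) z = dot x (br y z) + dot y (br x z).
Proof.
move=> dotC leibniz x y z; rewrite brN leibniz (brN z x) (brN z y).
by rewrite bilinear_mapNl // bilinear_mapNr // opprD !opprK addrC (dotC (br x z)).
Qed.

End PoissonIdentities.

Section PureTensors.
Variables (F : fieldType) (n m : nat).
Local Notation T := 'M[F]_(n, m).
Implicit Types (x y z : 'rV[F]_n) (a b c : 'rV[F]_m) (X Y Z : T).

Lemma tensE x a i k : tens x a i k = x 0 i * a 0 k.
Proof. by rewrite /tens mxE big_ord1 !mxE. Qed.

Lemma tens_basis i k : tens (basis_vec i) (basis_vec k) = delta_mx i k :> T.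
Proof. by rewrite /tens /basis_vec trmx_delta mul_delta_mx. Qed.

Lemma tens_linearl a : linear ((fun x => tens x a) : 'rV[F]_n -> T).
Proof. by move=> c x y; rewrite /tens linearP mulmxDl scalemxAl. Qed.

Lemma tens_linearr x : linear (tens x : 'rV[F]_m -> T).
Proof. by move=> c a b; rewrite /tens mulmxDr scalemxAr. Qed.

Lemma tensDr x a b : tens x (a + b) = tens x a + tens x b.
Proof. by rewrite /tens mulmxDr. Qed.

Lemma tensNr x a : tens x (- a) = - tens x a.
Proof. by rewrite /tens mulmxN. Qed.

Lemma tensBl x y a : tens (x - y) a = tens x a - tens y a.
Proof. by rewrite /tens linearB mulmxBl. Qed.

Lemma tens_suml I r (P : pred I) (u : I -> 'rV[F]_n) a :
  tens (\sum_(i <- r | P i) u i) a = \sum_(i <- r | P i) tens (u i) a.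
Proof. exact: linear_map_sum (tens_linearl a). Qed.

Lemma tens_sumr I r (P : pred I) x (u : I -> 'rV[F]_m) :
  tens x (\sum_(i <- r | P i) u i) = \sum_(i <- r | P i) tens x (u i).
Proof. exact: linear_map_sum (tens_linearr x). Qed.

Lemma tensZ s x t a : tens (s *: x) (t *: a) = (s * t) *: tens x a.
Proof.
by rewrite (linear_mapZ _ _ (tens_linearl _)) (linear_mapZ _ _ (tens_linearr _)) scalerA.
Qed.

Lemma linear_tensor_expand (W : lmodType F) (h : T -> W) X : linear h ->
  h X = \sum_(i < n) \sum_(k < m) X i k *: h (tens (basis_vec i) (basis_vec k)).
Proof.
move=> lh; rewrite {1}(matrix_sum_delta X) linear_map_sum //.
apply: eq_bigr => i _; rewrite linear_map_sum //.
by apply: eq_bigr => k _; rewrite linear_mapZ // tens_basis.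
Qed.

Lemma linear_tensor_ext (W : lmodType F) (h1 h2 : T -> W) :
  linear h1 -> linear h2 -> (forall x a, h1 (tens x a) = h2 (tens x a)) -> h1 =1 h2.
Proof.
move=> l1 l2 eq12 X; rewrite (linear_tensor_expand _ l1) (linear_tensor_expand _ l2).
by apply: eq_bigr => i _; apply: eq_bigr => k _; rewrite eq12.
Qed.

Lemma bilinear_tensor_ext (W : lmodType F) (f g : T -> T -> W) :
  bilinear_map f -> bilinear_map g ->
  (forall x a y b, f (tens x a) (tens y b) = g (tens x a) (tens y b)) ->
  forall X Y, f X Y = g X Y.
Proof.
move=> hf hg eqfg X Y.
apply: (linear_tensor_ext (h1 := f^~ Y) (h2 := g^~ Y)) => [||x a];
  try exact: bilinear_map_linearl.
by apply: linear_tensor_ext => [||y b]; try exact: bilinear_map_linearr.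
Qed.

Lemma trilinear_tensor_ext (W : lmodType F) (f g : T -> T -> T -> W) :
  trilinear_map f -> trilinear_map g ->
  (forall x a y b z c,
     f (tens x a) (tens y b) (tens z c) = g (tens x a) (tens y b) (tens z c)) ->
  forall X Y Z, f X Y Z = g X Y Z.
Proof.
move=> [f1 f2 f3] [g1 g2 g3] eqfg X Y Z.
apply: (linear_tensor_ext (h1 := fun X => f X Y Z) (h2 := fun X => g X Y Z)) => // x a.
apply: (linear_tensor_ext (h1 := fun Y => f _ Y Z) (h2 := fun Y => g _ Y Z)) => // y b.
exact: linear_tensor_ext.
Qed.

Lemma tensor_op_bilinear (mu : 'rV[F]_n -> 'rV[F]_n -> 'rV[F]_n)
    (nu : 'rV[F]_m -> 'rV[F]_m -> 'rV[F]_m) :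
  bilinear_map (tensor_op mu nu).
Proof.
split=> c X Y Z; rewrite /tensor_op scaler_sumr -big_split; apply: eq_bigr => i _;
rewrite scaler_sumr -big_split; apply: eq_bigr => j _;
rewrite scaler_sumr -big_split; apply: eq_bigr => k _;
rewrite scaler_sumr -big_split; apply: eq_bigr => l _;
by rewrite !mxE !scalerA /= -scalerDl; congr (_ *: _); ring.
Qed.

Lemma tensor_form_bilinear (BA : 'rV[F]_n -> 'rV[F]_n -> F)
    (BB : 'rV[F]_m -> 'rV[F]_m -> F) :
  bilinear_form (tensor_form BA BB).
Proof.
split=> c X Y Z; rewrite /tensor_form mulr_sumr -big_split; apply: eq_bigr => i _;
rewrite mulr_sumr -big_split; apply: eq_bigr => j _;
rewrite mulr_sumr -big_split; apply: eq_bigr => k _;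
rewrite mulr_sumr -big_split; apply: eq_bigr => l _;
by rewrite !mxE /=; ring.
Qed.

Lemma tensor_op_tens (mu : 'rV[F]_n -> 'rV[F]_n -> 'rV[F]_n)
    (nu : 'rV[F]_m -> 'rV[F]_m -> 'rV[F]_m) x a y b :
  bilinear_map mu -> bilinear_map nu ->
  tensor_op mu nu (tens x a) (tens y b) = tens (mu x y) (nu a b).
Proof.
move=> hmu hnu; rewrite (bilinear_map_expand x y hmu) (bilinear_map_expand a b hnu).
rewrite /tensor_op tens_suml; apply: eq_bigr => i _; rewrite tens_suml.
apply: eq_bigr => j _; rewrite tens_sumr; apply: eq_bigr => k _.
by rewrite tens_sumr; apply: eq_bigr => l _; rewrite tensZ !tensE mulrACA.
Qed.

Section TensorForm.
Variables (BA : 'rV[F]_n -> 'rV[F]_n -> F) (BB : 'rV[F]_m -> 'rV[F]_m -> F).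
Hypotheses (hBA : bilinear_form BA) (hBB : bilinear_form BB).
Let hBA' := bilinear_form_map hBA.
Let hBB' := bilinear_form_map hBB.

Lemma tensor_form_tens x a y b :
  tensor_form BA BB (tens x a) (tens y b) = BA x y * BB a b.
Proof.
rewrite (bilinear_map_expand x y hBA').
rewrite (bilinear_map_expand a b hBB') /tensor_form mulr_suml.
apply: eq_bigr => i _; rewrite mulr_suml; apply: eq_bigr => j _.
rewrite mulr_sumr; apply: eq_bigr => k _; rewrite mulr_sumr; apply: eq_bigr => l _.
by rewrite !tensE /GRing.scale /=; ring.
Qed.

Lemma tensor_form_tensr X y b :
  tensor_form BA BB X (tens y b) = BB (\row_k BA (col k X)^T y) b.
Proof.
have hT := bilinear_form_map (tensor_form_bilinear BA BB).
rewrite (linear_tensor_expand _ (bilinear_map_linearl _ hT)).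
rewrite (linear_row_expand _ (bilinear_map_linearl b hBB')) exchange_big /=.
apply: eq_bigr => k _; rewrite mxE (linear_row_expand _ (bilinear_map_linearl y hBA')).
rewrite /GRing.scale /= mulr_suml; apply: eq_bigr => i _.
by rewrite tensor_form_tens !mxE /GRing.scale /= mulrA.
Qed.

Lemma tensor_form_nondegenerate :
  Defs.nondegenerate BA -> Defs.nondegenerate BB ->
  Defs.nondegenerate (tensor_form BA BB).
Proof.
move=> ndA ndB X X_orth; apply/matrixP => i k; rewrite mxE.
have col_k0 : (col k X)^T = 0.
  apply: ndA => y.
  have row0 : \row_k' BA (col k' X)^T y = 0.
    by apply: ndB => b; rewrite -tensor_form_tensr X_orth.
  by move/rowP/(_ k): row0; rewrite !mxE.
by move/rowP/(_ i): col_k0; rewrite !mxE.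
Qed.

End TensorForm.

End PureTensors.

Ltac linear_tac :=
  cbv beta; repeat match goal with
  | |- bilinear_map (tensor_op _ _) => exact: tensor_op_bilinear
  | |- bilinear_form (tensor_form _ _) => exact: tensor_form_bilinear
  | |- linear (fun X => X) => exact: linear_idfun
  | |- linear (fun X => _ + _) => apply: linear_addfun
  | |- linear (fun X => - _) => apply: linear_oppfun
  | |- linear (fun X => ?f (@?g X) ?y) =>
      first [apply: (linear_bilinl (f := f) (g := g) y)
            | apply: (linear_forml (f := f) (g := g) y)]
  | |- linear (fun X => ?f ?x (@?g X)) =>
      first [apply: (linear_bilinr (f := f) (g := g) x)
            | apply: (linear_formr (f := f) (g := g) x)]
  | |- linear (?f ?x) =>
      first [apply: (linear_bilinr (f := f) (g := fun u => u) x)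
            | apply: (linear_formr (f := f) (g := fun u => u) x)]
  end.

Ltac multilinear_tac :=
  lazymatch goal with
  | |- @bilinear_map _ _ ?W _ => apply: (bilinear_mapP (W := W))
  | |- _ => split
  end; move=> *; solve [linear_tac].

Section TensorIdentities.
Variables (F : fieldType) (n m : nat).
Local Notation T := 'M[F]_(n, m).
Variable star : 'rV[F]_n -> 'rV[F]_n -> 'rV[F]_n.
Hypotheses (hstar : bilinear_map star)
  (starA : forall x y z, star x (star y z) = star (star x y) z)
  (starP : forall x y z, star (star x y) z = star (star y x) z).
Variables (dot br : 'rV[F]_m -> 'rV[F]_m -> 'rV[F]_m).
Hypotheses (hdot : bilinear_map dot) (hbr : bilinear_map br).
Local Notation circ := (tensor_op star dot).
Local Notation bracket := (tensor_op star br).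

Lemma tensor_circA :
  (forall a b c, dot a (dot b c) = dot (dot a b) c) ->
  forall X Y Z : T, circ X (circ Y Z) = circ (circ X Y) Z.
Proof.
move=> dotA; apply: trilinear_tensor_ext; [multilinear_tac.. | move=> x a y b z c].
by rewrite !tensor_op_tens // starA dotA.
Qed.

Lemma tensor_circ_perm :
  (forall a b, dot a b = dot b a) ->
  forall X Y Z : T, circ (circ X Y) Z = circ (circ Y X) Z.
Proof.
move=> dotC; apply: trilinear_tensor_ext; [multilinear_tac.. | move=> x a y b z c].
by rewrite !tensor_op_tens // starP (dotC a).
Qed.

Lemma tensor_bracket_leibniz :
  (forall a b c, br a (br b c) = br (br a b) c + br b (br a c)) ->
  forall X Y Z : T,
    bracket X (bracket Y Z) = bracket (bracket X Y) Z + bracket Y (bracket X Z).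
Proof.
move=> br_leibniz; apply: trilinear_tensor_ext; [multilinear_tac.. | move=> x a y b z c].
by rewrite !tensor_op_tens // !starA (starP y) -tensDr br_leibniz.
Qed.

Lemma tensor_bracket_circr :
  (forall a b c, br a (dot b c) = dot (br a b) c + dot b (br a c)) ->
  forall X Y Z : T, bracket X (circ Y Z) = circ (bracket X Y) Z + circ Y (bracket X Z).
Proof.
move=> leibniz; apply: trilinear_tensor_ext; [multilinear_tac.. | move=> x a y b z c].
by rewrite !tensor_op_tens // !starA (starP y) -tensDr leibniz.
Qed.

Lemma tensor_bracket_circl :
  (forall a b c, br (dot a b) c = dot a (br b c) + dot b (br a c)) ->
  forall X Y Z : T, bracket (circ X Y) Z = circ X (bracket Y Z) + circ Y (bracket X Z).
Proof.
move=> leibniz; apply: trilinear_tensor_ext; [multilinear_tac.. | move=> x a y b z c].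
by rewrite !tensor_op_tens // !starA (starP y) -tensDr leibniz.
Qed.

Lemma tensor_bracket_skew_circ :
  (forall a b, br a b = - br b a) ->
  forall X Y Z : T, circ (bracket X Y) Z = - circ (bracket Y X) Z.
Proof.
move=> brN; apply: trilinear_tensor_ext; [multilinear_tac.. | move=> x a y b z c].
by rewrite !tensor_op_tens // (starP y) (brN b) bilinear_mapNl // tensNr opprK.
Qed.

Variables (BA : 'rV[F]_n -> 'rV[F]_n -> F) (BB : 'rV[F]_m -> 'rV[F]_m -> F).
Hypotheses (hBA : bilinear_form BA) (hBB : bilinear_form BB).
Local Notation form := (tensor_form BA BB).

Lemma tensor_form_skew :
  skew_symmetric BA -> Defs.symmetric_form BB -> skew_symmetric (form : T -> T -> F).
Proof.
move=> skA symB; apply: (bilinear_tensor_ext (W := F^o)); [multilinear_tac.. |].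
by move=> x a y b; rewrite !tensor_form_tens // skA symB mulNr.
Qed.

Lemma tensor_form_invariant_circ :
  (forall x y z, BA (star x y) z = BA x (star y z - star z y)) ->
  (forall a b c, BB (dot a b) c = BB a (dot b c)) ->
  (forall a b, dot a b = dot b a) ->
  forall X Y Z : T, form (circ X Y) Z = form X (circ Y Z - circ Z Y).
Proof.
move=> invA invB dotC; apply: (trilinear_tensor_ext (W := F^o)); [multilinear_tac.. |].
move=> x a y b z c; rewrite !tensor_op_tens // (dotC c) -tensBl.
by rewrite !tensor_form_tens // invA invB.
Qed.

Lemma tensor_form_invariant_bracket :
  (forall x y z, BA (star x y) z = BA x (star y z - star z y)) ->
  (forall a b c, BB (br a b) c = BB a (br b c)) ->
  (forall a b, br a b = - br b a) ->
  forall X Y Z : T, form (bracket X Y) Z = form X (bracket Y Z + bracket Z Y).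
Proof.
move=> invA invB brN; apply: (trilinear_tensor_ext (W := F^o)); [multilinear_tac.. |].
move=> x a y b z c; rewrite !tensor_op_tens // (brN c) tensNr -tensBl.
by rewrite !tensor_form_tens // invA invB.
Qed.

End TensorIdentities.

Theorem proposition2p37 (F : fieldType) (n m : nat)
    (star : 'rV[F]_n -> 'rV[F]_n -> 'rV[F]_n) (BA : 'rV[F]_n -> 'rV[F]_n -> F)
    (dot br : 'rV[F]_m -> 'rV[F]_m -> 'rV[F]_m) (BB : 'rV[F]_m -> 'rV[F]_m -> F) :
  [pchar F] =i pred0 ->
  quadratic_permutative star BA ->
  quadratic_poisson dot br BB ->
  quadratic_dual_pre_poisson (tensor_op star dot) (tensor_op star br)
                             (tensor_form BA BB).
Proof.
move=> _ [hstar starA starP hBA [skA ndA invA]].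
move=> [hdot hbr dotC dotA [brN jacobi leibniz hBB [symB ndB invBd invBb]]].
split; [exact: tensor_op_bilinear | exact: tensor_op_bilinear
       | exact: tensor_circA | exact: tensor_circ_perm | split].
- exact/tensor_bracket_leibniz/lie_leibniz.
- exact: tensor_bracket_circr.
- exact/tensor_bracket_circl/poisson_leibnizl.
- exact: tensor_bracket_skew_circ.
split.
- exact: tensor_form_bilinear.
- exact: tensor_form_skew.
- exact: tensor_form_nondegenerate.
- exact: tensor_form_invariant_circ.
- exact: tensor_form_invariant_bracket.
Qed.
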